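(* Let $C$ be a cone in $\mathbb{R}^n$ and let $X$ and $Y$ be nonempty decomposably $C$-antichain-convex subsets of $\mathbb{R}^n$. (1) If $X$ is $C$-upward and $\operatorname{ri}(X)\cap Y=\emptyset$, then $X$ and $Y$ are properly separated. (2) If $X$ is $C$-downward and $\operatorname{ri}(X)\cap Y=\emptyset$, then $X$ and $Y$ are properly separated.
   Context: A cone in $\mathbb{R}^n$ is a subset $C$ with $\lambda C\subseteq C$ for all $\lambda>0$ (possibly empty, need not contain $0$). $S$ is $C$-antichain-convex iff for all $x,y\in S$ and $\lambda\in[0,1]$ with $y-x\notin C\cup(-C)$ one has $\lambda x+(1-\lambda)y\in S$; $S$ is decomposably $C$-antichain-convex iff it is a Minkowski sum of finitely many $C$-antichain-convex sets. $S$ is $C$-upward iff $S+C\subseteq S$; $C$-downward iff $S-C\subseteq S$. $\operatorname{ri}(Z)$ is the relative interior of $Z$ (interior relative to its affine hull). $X$ and $Y$ are properly separated iff there is a linear functional $f$ on $\mathbb{R}^n$ with $\sup f[X]\le\inf f[Y]$ and $\inf f[X]<\sup f[Y]$. *)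

From mathcomp Require Import all_boot all_order all_algebra.
From mathcomp Require Import all_classical all_reals ereal.
Set Implicit Arguments. Unset Strict Implicit. Unset Printing Implicit Defensive.
Import Order.TTheory GRing.Theory Num.Theory.
Local Open Scope classical_set_scope.
Local Open Scope ring_scope.

Section Defs.
Variables (R : realType) (n : nat).
Notation V := 'rV[R]_n.

(* a cone: closed under positive scaling (may be empty, need not contain 0) *)
Definition is_cone (C : set V) : Prop :=
  forall (lam : R) (c : V), 0 < lam -> C c -> C (lam *: c).

Definition negset (C : set V) : set V := [set - c | c in C].

Definition antichain_convex (C S : set V) : Prop :=
  forall (x y : V) (lam : R), S x -> S y -> 0 <= lam <= 1 ->
    ~ (C `|` negset C) (y - x) -> S (lam *: x + (1 - lam) *: y).

Definition minkowski_sum (k : nat) (S : 'I_k -> set V) : set V :=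
  [set x | exists p : 'I_k -> V, (forall i, S i (p i)) /\ x = \sum_(i < k) p i].

Definition decomp_antichain_convex (C X : set V) : Prop :=
  exists (k : nat) (S : 'I_k -> set V),
    (forall i, antichain_convex C (S i)) /\ X = minkowski_sum S.

Definition upward (C X : set V) : Prop := forall x c, X x -> C c -> X (x + c).
Definition downward (C X : set V) : Prop := forall x c, X x -> C c -> X (x - c).

Definition aff_hull (Z : set V) : set V :=
  [set x | exists (k : nat) (w : 'I_k -> R) (p : 'I_k -> V),
     (forall i, Z (p i)) /\ \sum_(i < k) w i = 1 /\ x = \sum_(i < k) w i *: p i].

Definition rel_interior (Z : set V) : set V :=
  [set x | Z x /\ exists e : R, 0 < e /\
     forall y, aff_hull Z y -> (forall j, `|y ord0 j - x ord0 j| < e) -> Z y].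

Definition linear_functional (f : V -> R) : Prop :=
  forall (a : R) (x y : V), f (a *: x + y) = a * f x + f y.

Definition properly_separated (X Y : set V) : Prop :=
  exists f : V -> R, linear_functional f /\
    (ereal_sup [set (f x)%:E | x in X] <= ereal_inf [set (f y)%:E | y in Y])%E /\
    (ereal_inf [set (f x)%:E | x in X] < ereal_sup [set (f y)%:E | y in Y])%E.

End Defs.

From mathcomp Require Import all_boot all_order all_algebra.
From mathcomp Require Import all_classical all_reals ereal.
From mathcomp Require Import ring lra.
Set Implicit Arguments. Unset Strict Implicit. Unset Printing Implicit Defensive.
Import Order.TTheory GRing.Theory Num.Theory.
Local Open Scope classical_set_scope.
Local Open Scope ring_scope.

(* If X is C-upward and decomposably C-antichain-convex, it is convex: a convex
   combination of two points of a C-antichain-convex set is a point of that set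
   plus a vector of C or 0, which upwardness absorbs.  Applied to Y with -C, the
   same decomposition shows that W = Y - rec X is convex, where rec X is the set
   of recession directions of X.  The cone spanned by W - X is therefore convex,
   and it is not a linear subspace: otherwise some point of W would lie in the
   core of X, and adding back a recession direction would put a point of Y in
   ri X.  A convex cone that is not a subspace carries a linear functional that
   is nonnegative on it and positive somewhere (induction on the dimension,
   extending one coordinate at a time as in Hahn-Banach), and that functional
   properly separates X and Y.  The downward case is the upward case for -C. *)

Section LinearFunctional.
Variables (R : realType) (n : nat) (f : 'rV[R]_n -> R).
Hypothesis lf : linear_functional f.

Lemma linear_functionalD x y : f (x + y) = f x + f y.
Proof. by rewrite -[x in LHS]scale1r lf mul1r. Qed.

Lemma linear_functional0 : f 0 = 0.
Proof. by apply: (addrI (f 0)); rewrite -linear_functionalD !addr0. Qed.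

Lemma linear_functionalZ a x : f (a *: x) = a * f x.
Proof. by rewrite -[a *: x]addr0 lf linear_functional0 addr0. Qed.

Lemma linear_functionalB x y : f (x - y) = f x - f y.
Proof. by rewrite -scaleN1r linear_functionalD linear_functionalZ mulN1r. Qed.

End LinearFunctional.

Lemma ge0_of_ray (R : realFieldType) (a b : R) :
  (forall t, 0 < t -> 0 <= a + t * b) -> 0 <= a.
Proof.
move=> ray; rewrite leNgt; apply/negP => a0.
have [b0|b0] := lerP b 0; first by have := ray 1 ltr01; lra.
have t0 : 0 < - a / (2 * b) by rewrite divr_gt0 //; lra.
have := ray _ t0; have -> : - a / (2 * b) * b = - a / 2 by field; lra.
lra.
Qed.

Section ConvexCones.
Variable R : realType.

Definition convex_cone n (K : set 'rV[R]_n) :=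
  (forall a b, K a -> K b -> K (a + b)) /\
  (forall t a, 0 < t -> K a -> K (t *: a)).

Definition properly_supported n (K : set 'rV[R]_n) := exists f,
  [/\ linear_functional f, forall k, K k -> 0 <= f k & exists2 k, K k & 0 < f k].

Lemma convex_cone_halfspace n (K : set 'rV[R]_n) h :
  convex_cone K -> linear_functional h -> convex_cone [set k | K k /\ h k < 0].
Proof.
move=> [Kadd Kscale] lh; split.
- move=> a b [Ka ha] [Kb hb]; split; first exact: Kadd.
  by rewrite (linear_functionalD lh); lra.
- move=> t a t0 [Ka ha]; split; first exact: Kscale.
  by rewrite (linear_functionalZ lh) pmulr_rlt0.
Qed.

Lemma nonneg_on_kernel n (K : set 'rV[R]_n) g h k1 :
  convex_cone K -> linear_functional g -> linear_functional h ->
  K k1 -> h k1 < 0 -> (forall k, K k -> h k < 0 -> 0 <= g k) ->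
  forall k, K k -> h k = 0 -> 0 <= g k.
Proof.
move=> [Kadd Kscale] lg lh Kk1 hk1 g0 k Kk hk.
apply: (@ge0_of_ray _ _ (g k1)) => t t0.
rewrite -(linear_functionalZ lg) -(linear_functionalD lg).
apply: g0; first by apply: Kadd => //; exact: Kscale.
by rewrite (linear_functionalD lh) (linear_functionalZ lh) hk add0r pmulr_rlt0.
Qed.

(* One-dimensional Hahn-Banach step: [lam] is the supremum of the lower bounds
   [- g k / h k] over the points of [K] with [h k > 0]. *)
Lemma nonneg_extension n (K : set 'rV[R]_n) g h k0 k1 :
  convex_cone K -> linear_functional g -> linear_functional h ->
  K k0 -> 0 < h k0 -> K k1 -> h k1 < 0 ->
  (forall k, K k -> h k = 0 -> 0 <= g k) ->
  exists lam, forall k, K k -> 0 <= g k + lam * h k.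
Proof.
move=> [Kadd Kscale] lg lh Kk0 hk0 Kk1 hk1 g0.
have bound k k' : K k -> 0 < h k -> K k' -> h k' < 0 -> - g k / h k <= g k' / - h k'.
  move=> Kk hk Kk' hk'.
  have : 0 <= g (- h k' *: k + h k *: k').
    apply: g0; first by apply: Kadd; apply: Kscale; rewrite ?oppr_gt0.
    by rewrite (linear_functionalD lh) !(linear_functionalZ lh); ring.
  rewrite (linear_functionalD lg) !(linear_functionalZ lg) => ineq.
  by rewrite ler_pdivlMr ?oppr_gt0 // mulrAC ler_pdivrMr //; nra.
pose A := [set - g k / h k | k in [set k | K k /\ 0 < h k]].
have supA : has_sup A.
  split; first by exists (- g k0 / h k0), k0.
  by exists (g k1 / - h k1) => _ [k [Kk hk] <-]; exact: bound.
exists (sup A) => k Kk; have [hk|hk|hk] := ltrgtP (h k) 0; last first.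
  by rewrite hk mulr0 addr0; exact: g0.
- have : - g k / h k <= sup A by apply: sup_upper_bound => //; exists k.
  by rewrite ler_pdivrMr //; nra.
- have : sup A <= g k / - h k.
    apply: ge_sup; first by case: supA.
    by move=> _ [k' [Kk' hk'] <-]; exact: bound.
  by rewrite ler_pdivlMr ?oppr_gt0 //; nra.
Qed.

Definition hd n (v : 'rV[R]_n.+1) : R := v 0 ord0.
Definition tl n (v : 'rV[R]_n.+1) : 'rV[R]_n := \row_j v 0 (lift ord0 j).
Arguments hd {n}.
Arguments tl {n}.

Lemma hdD n (x y : 'rV[R]_n.+1) : hd (x + y) = hd x + hd y.
Proof. by rewrite /hd mxE. Qed.

Lemma hdZ n a (x : 'rV[R]_n.+1) : hd (a *: x) = a * hd x.
Proof. by rewrite /hd mxE. Qed.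

Lemma tlD n (x y : 'rV[R]_n.+1) : tl (x + y) = tl x + tl y.
Proof. by apply/rowP => j; rewrite !mxE. Qed.

Lemma tlZ n a (x : 'rV[R]_n.+1) : tl (a *: x) = a *: tl x.
Proof. by apply/rowP => j; rewrite !mxE. Qed.

Lemma hd_tl_eq0 n (x : 'rV[R]_n.+1) : hd x = 0 -> tl x = 0 -> x = 0.
Proof.
move=> hx /rowP tx; apply/rowP => j; rewrite mxE.
by case: (unliftP ord0 j) => [j'|] ->; [have := tx j'; rewrite !mxE | ].
Qed.

Lemma convex_cone_tl n (K : set 'rV[R]_n.+1) : convex_cone K -> convex_cone (tl @` K).
Proof.
move=> [Kadd Kscale]; split.
- by move=> _ _ [a Ka <-] [b Kb <-]; exists (a + b); [exact: Kadd | exact: tlD].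
- by move=> t _ t0 [a Ka <-]; exists (t *: a); [exact: Kscale | exact: tlZ].
Qed.

Lemma properly_supported_tl n (K : set 'rV[R]_n.+1) :
  properly_supported (tl @` K) -> properly_supported K.
Proof.
move=> [g [lg g0 [_ [k Kk <-] gk]]]; exists (g \o tl); split.
- by move=> a x y /=; rewrite tlD tlZ lg.
- by move=> k' Kk'; apply: g0; exists k'.
- by exists k.
Qed.

(* [K] meets the first axis at [k0]: support the part of [K] on the other side
   of the axis from [k0] in dimension [n], then tilt the support along the axis. *)
Lemma properly_supported_axis n (K : set 'rV[R]_n.+1) k0 :
  (forall L : set 'rV[R]_n, convex_cone L -> L !=set0 -> ~ L 0 -> properly_supported L) ->
  convex_cone K -> ~ K 0 -> K k0 -> tl k0 = 0 -> properly_supported K.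
Proof.
move=> IH coneK K0 Kk0 tk0.
pose h (v : 'rV[R]_n.+1) := hd v * hd k0.
have lh : linear_functional h by move=> a x y; rewrite /h hdD hdZ; ring.
have hk0 : 0 < h k0.
  rewrite /h -expr2 exprn_even_gt0 //=; apply: contra_notN K0 => /eqP hd0.
  by rewrite -(hd_tl_eq0 hd0 tk0).
have [[k1 Kk1 hk1]|] := pselect (exists2 k1, K k1 & h k1 < 0); last first.
  move=> noneg; exists h; split => //; last by exists k0.
  by move=> k Kk; rewrite leNgt; apply/negP => hk; apply: noneg; exists k.
pose L := [set k | K k /\ h k < 0].
have tlL0 : ~ (tl @` L) 0.
  move=> [k [Kk hk] tk]; apply: K0; case: coneK => Kadd Kscale.
  have -> : 0 = (- h k) *: k0 + h k0 *: k.
    apply/esym/hd_tl_eq0; first by rewrite hdD !hdZ /h; ring.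
    by rewrite tlD !tlZ tk tk0 !scaler0 addr0.
  by apply: Kadd; apply: Kscale; rewrite ?oppr_gt0.
have tlLn : (tl @` L) !=set0 by exists (tl k1), k1.
have [g [lg g0 [_ [k2 [Kk2 hk2] <-] gk2]]] :=
  IH _ (convex_cone_tl (convex_cone_halfspace coneK lh)) tlLn tlL0.
have lgtl : linear_functional (g \o tl) by move=> a x y /=; rewrite tlD tlZ lg.
have gtl0 k : K k -> h k < 0 -> 0 <= (g \o tl) k by move=> Kk hk; apply: g0; exists k.
have [lam lamP] := nonneg_extension coneK lgtl lh Kk0 hk0 Kk1 hk1
  (nonneg_on_kernel coneK lgtl lh Kk1 hk1 gtl0).
have lam0 : 0 <= lam.
  by have := lamP _ Kk0; rewrite /= tk0 (linear_functional0 lg) add0r pmulr_lge0.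
exists (fun v => g (tl v) + lam * h v); split => //.
- by move=> a x y; rewrite tlD tlZ lg lh; ring.
- move: lam0; rewrite le_eqVlt => /predU1P[<-|lam_gt0].
  + by exists k2 => //; rewrite mul0r addr0.
  + by exists k0 => //; rewrite tk0 (linear_functional0 lg) add0r mulr_gt0.
Qed.

Lemma properly_supported_pointed n (K : set 'rV[R]_n) :
  convex_cone K -> K !=set0 -> ~ K 0 -> properly_supported K.
Proof.
elim: n K => [|n IH] K coneK [k Kk] K0; first by case: K0; rewrite -(thinmx0 k).
have [[k0 Kk0 tk0]|noaxis] := pselect (exists2 k0, K k0 & tl k0 = 0).
  exact: properly_supported_axis IH coneK K0 Kk0 tk0.
apply/properly_supported_tl/IH; first exact: convex_cone_tl.
- by exists (tl k), k.
- by move=> [k0 Kk0 tk0]; apply: noaxis; exists k0.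
Qed.

Lemma properly_supported_not_subspace n (K : set 'rV[R]_n) k0 :
  convex_cone K -> K k0 -> ~ K (- k0) -> properly_supported K.
Proof.
move=> [Kadd Kscale] Kk0 Kk0N.
(* [M = K + (0, +oo) k0] is pointed because [- k0] is not in [K]. *)
pose M := [set v | exists k t, [/\ K k, 0 < t & v = k + t *: k0]].
have coneM : convex_cone M.
  split.
  - move=> _ _ [k [t [Kk t0 ->]]] [k' [t' [Kk' t0' ->]]]; exists (k + k'), (t + t').
    by split; [exact: Kadd | exact: addr_gt0 | rewrite scalerDl addrACA].
  - move=> s _ s0 [k [t [Kk t0 ->]]]; exists (s *: k), (s * t).
    by split; [exact: Kscale | exact: mulr_gt0 | rewrite scalerDr scalerA].
have Mk0 : M (k0 + 1 *: k0) by exists k0, 1.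
have M0 : ~ M 0.
  move=> [k [t [Kk t0 /eqP]]]; rewrite eq_sym addr_eq0 => /eqP ek; apply: Kk0N.
  rewrite -[- k0](scalerK (lt0r_neq0 t0)) scalerN -ek.
  by apply: Kscale; rewrite ?invr_gt0.
have [f [lf f0 [_ [k [t [Kk t0 ->]]] fm]]] :=
  properly_supported_pointed coneM (ex_intro _ _ Mk0) M0.
have fk0 : 0 <= f k0.
  by have := f0 _ Mk0; rewrite (linear_functionalD lf) scale1r; lra.
exists f; split => //.
- move=> k' Kk'; apply: (@ge0_of_ray _ _ (f k0)) => s s0.
  by rewrite -(linear_functionalZ lf) -(linear_functionalD lf); apply: f0; exists k', s.
- move: fm; rewrite (linear_functionalD lf) (linear_functionalZ lf) => fm.
  have [fk|fk] := ltrP 0 (f k); first by exists k.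
  by exists k0 => //; nra.
Qed.

End ConvexCones.

Lemma mulmx_row_norm_le (R : numDomainType) m p (u : 'rV[R]_m) (A : 'M[R]_(m, p)) e j :
  (forall l, `|u 0 l| <= e) -> `|(u *m A) 0 j| <= e * \sum_l `|A l j|.
Proof.
move=> ue; rewrite mxE mulr_sumr; apply: le_trans (ler_norm_sum _ _ _) _.
by apply: ler_sum => l _; rewrite normrM ler_wpM2r.
Qed.

Section Convexity.
Variables (R : realType) (n : nat).
Notation V := 'rV[R]_n.
Implicit Types (C X Y W : set V).

Definition is_convex X := forall x y lam,
  X x -> X y -> 0 <= lam <= 1 -> X (lam *: x + (1 - lam) *: y).

Lemma convex_subsimplex X x0 k (b : 'I_k -> V) (w : 'I_k -> R) :
  is_convex X -> X x0 -> (forall l, X (x0 + b l)) -> (forall l, 0 <= w l) ->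
  \sum_l w l <= 1 -> X (x0 + \sum_l w l *: b l).
Proof.
move=> Xc Xx0; elim: k b w => [|k IH] b w Xb w0 ws; first by rewrite big_ord0 addr0.
rewrite big_ord_recr /=; rewrite big_ord_recr /= in ws.
set s := w ord_max in ws *; set w' := fun i => w (widen_ord (leqnSn k) i) in ws *.
have s0 : 0 <= s := w0 ord_max.
have w'0 i : 0 <= w' i by exact: w0.
have S0 : 0 <= \sum_i w' i by exact: sumr_ge0.
have [s1|s_neq1] := eqVneq s 1.
  have w'_eq0 := psumr_eq0P (fun i _ => w'0 i) (_ : \sum_i w' i = 0).
  rewrite big1 ?add0r ?s1 ?scale1r // => i _.
  by rewrite [w _]w'_eq0 ?scale0r //; lra.
have s_lt1 : s < 1 by rewrite lt_neqAle s_neq1; lra.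
have hs : 0 < 1 - s by lra.
pose b' i := b (widen_ord (leqnSn k) i).
have Xp : X (x0 + \sum_i (w' i / (1 - s)) *: b' i).
  apply: IH => [i|i|]; [exact: Xb | by rewrite divr_ge0 // ltW |].
  by rewrite -mulr_suml ler_pdivrMr // mul1r; lra.
have -> : x0 + (\sum_i w' i *: b' i + s *: b ord_max) =
    (1 - s) *: (x0 + \sum_i (w' i / (1 - s)) *: b' i) + (1 - (1 - s)) *: (x0 + b ord_max).
  rewrite (_ : 1 - (1 - s) = s) ?scalerDr ?scaler_sumr; last by ring.
  under [in RHS]eq_bigr do rewrite scalerA mulrCA divff ?mulr1 ?lt0r_neq0 //.
  by rewrite addrACA -scalerDl subrK scale1r.
by apply: Xc => //; apply/andP; split; lra.
Qed.

Lemma is_cone_scale_ge0 C t c : is_cone C -> C c -> 0 <= t -> t *: c = 0 \/ C (t *: c).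
Proof.
move=> coneC Cc; rewrite le_eqVlt => /predU1P[<-|t0]; first by left; rewrite scale0r.
by right; exact: coneC.
Qed.

Lemma antichain_convex_comb C (S : set V) x y lam :
  is_cone C -> antichain_convex C S -> S x -> S y -> 0 <= lam <= 1 ->
  exists r c, [/\ S r, c = 0 \/ C c & lam *: x + (1 - lam) *: y = r + c].
Proof.
move=> coneC Sac Sx Sy /andP[lam0 lam1].
have [yx|yx] := pselect ((C `|` negset C) (y - x)); last first.
  exists (lam *: x + (1 - lam) *: y), 0; split; [|by left|by rewrite addr0].
  by apply: Sac => //; apply/andP.
case: yx => [Cyx | [c Cc ec]].
- exists x, ((1 - lam) *: (y - x)); split => //.
    by apply: is_cone_scale_ge0; rewrite ?subr_ge0.
  by apply/rowP => j; rewrite !mxE; ring.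
- have cE : c = x - y by rewrite -[c]opprK ec opprB.
  rewrite {}cE in Cc; exists y, (lam *: (x - y)); split => //.
    exact: is_cone_scale_ge0.
  by apply/rowP => j; rewrite !mxE; ring.
Qed.

Lemma minkowski_sum_convex_comb C k (S : 'I_k -> set V) x y lam :
  is_cone C -> (forall i, antichain_convex C (S i)) ->
  minkowski_sum S x -> minkowski_sum S y -> 0 <= lam <= 1 ->
  exists r (c : 'I_k -> V), [/\ minkowski_sum S r, forall i, c i = 0 \/ C (c i) &
    lam *: x + (1 - lam) *: y = r + \sum_i c i].
Proof.
move=> coneC Sac [p [Sp ->]] [q [Sq ->]] hlam.
have /choice[rc rcP] i : exists rc : V * V, [/\ S i rc.1, rc.2 = 0 \/ C rc.2 &
    lam *: p i + (1 - lam) *: q i = rc.1 + rc.2].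
  have [r [c [Sr Cc e]]] := antichain_convex_comb coneC (Sac i) (Sp i) (Sq i) hlam.
  by exists (r, c).
exists (\sum_i (rc i).1), (fun i => (rc i).2); split.
- by exists (fun i => (rc i).1); split => // i; case: (rcP i).
- by move=> i; case: (rcP i).
- rewrite !scaler_sumr -!big_split; apply: eq_bigr => i _.
  by case: (rcP i).
Qed.

Definition recession X := [set c | forall x, X x -> X (x + c)].

Lemma recession0 X : recession X 0.
Proof. by move=> x Xx; rewrite addr0. Qed.

Lemma recessionD X a b : recession X a -> recession X b -> recession X (a + b).
Proof. by move=> Ka Kb x Xx; rewrite addrA; apply: Kb; apply: Ka. Qed.

Lemma recession_convex X : is_convex X -> is_convex (recession X).
Proof.
move=> Xc a b lam Ka Kb hlam x Xx.
have -> : x + (lam *: a + (1 - lam) *: b) = lam *: (x + a) + (1 - lam) *: (x + b).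
  by apply/rowP => j; rewrite !mxE; ring.
by apply: Xc => //; [exact: Ka | exact: Kb].
Qed.

Lemma upward_recession_sum C X k (c : 'I_k -> V) :
  upward C X -> (forall i, c i = 0 \/ C (c i)) -> recession X (\sum_i c i).
Proof.
move=> up Cc; apply: (big_rec (recession X)) => [|i s _ Ks x Xx]; first exact: recession0.
rewrite addrA; apply: Ks.
by case: (Cc i) => [->|Cci]; [rewrite addr0 | exact: up].
Qed.

Lemma upward_decomp_convex C X :
  is_cone C -> decomp_antichain_convex C X -> upward C X -> is_convex X.
Proof.
move=> coneC [k [S [Sac ->]]] up x y lam Xx Xy hlam.
have [r [c [Sr Cc ->]]] := minkowski_sum_convex_comb coneC Sac Xx Xy hlam.
exact: upward_recession_sum up Cc _ Sr.
Qed.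

Lemma negsetK C : negset (negset C) = C.
Proof.
apply/seteqP; split => [_ [_ [c Cc <-] <-]|c Cc]; first by rewrite opprK.
by exists (- c); [exists c | rewrite opprK].
Qed.

Lemma is_cone_negset C : is_cone C -> is_cone (negset C).
Proof. by move=> coneC t _ t0 [c Cc <-]; exists (t *: c); [exact: coneC | rewrite scalerN]. Qed.

Lemma antichain_convex_negset C (S : set V) :
  antichain_convex C S -> antichain_convex (negset C) S.
Proof.
move=> Sac x y lam Sx Sy hlam nc; apply: Sac => // Cyx; apply: nc.
by case: Cyx => [Cyx|Nyx]; [right; rewrite negsetK | left].
Qed.

Lemma decomp_antichain_convex_negset C X :
  decomp_antichain_convex C X -> decomp_antichain_convex (negset C) X.
Proof. by move=> [k [S [Sac ->]]]; exists k, S; split => // i; exact: antichain_convex_negset. Qed.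

Lemma downward_upward_negset C X : downward C X -> upward (negset C) X.
Proof. by move=> down x _ Xx [c Cc <-]; exact: down. Qed.

Definition sub_recession X Y := [set y - c | y in Y & c in recession X].

Lemma sub_recession_self X Y y : Y y -> sub_recession X Y y.
Proof. by move=> Yy; exists y => //; exists 0; [exact: recession0 | rewrite subr0]. Qed.

Lemma is_convex_sub_recession C X Y :
  is_cone C -> decomp_antichain_convex C Y -> upward C X -> is_convex X ->
  is_convex (sub_recession X Y).
Proof.
move=> coneC [k [S [Sac Ye]]] up Xc _ _ lam [y1 Yy1 [c1 Kc1 <-]] [y2 Yy2 [c2 Kc2 <-]] hlam.
rewrite Ye in Yy1 Yy2.
(* Decomposing with [-C], the combination of [y1] and [y2] is a point of [Y]
   minus a sum of vectors of [C], which is a recession direction of [X]. *)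
have [r [c [Sr Cc e]]] := minkowski_sum_convex_comb (is_cone_negset coneC)
  (fun i => antichain_convex_negset (Sac i)) Yy1 Yy2 hlam.
have Kc : recession X (\sum_i - c i).
  apply: (upward_recession_sum up) => i.
  by case: (Cc i) => [->|[c' Cc' <-]]; [left; rewrite oppr0 | right; rewrite opprK].
exists r; first by rewrite Ye.
exists (\sum_i - c i + (lam *: c1 + (1 - lam) *: c2)).
  by apply: recessionD => //; exact: recession_convex.
have -> : lam *: (y1 - c1) + (1 - lam) *: (y2 - c2) =
    lam *: y1 + (1 - lam) *: y2 - (lam *: c1 + (1 - lam) *: c2).
  by apply/rowP => j; rewrite !mxE; ring.
by rewrite e sumrN opprD opprK addrA.
Qed.

Definition diff_cone X W :=
  [set v | exists t x w, [/\ 0 < t, X x, W w & v = t *: (w - x)]].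

Lemma convex_cone_diff_cone X W : is_convex X -> is_convex W -> convex_cone (diff_cone X W).
Proof.
move=> Xc Wc; split.
- move=> _ _ [t [x [w [t0 Xx Ww ->]]]] [s [x' [w' [s0 Xx' Ww' ->]]]].
  have ts : 0 < t + s by exact: addr_gt0.
  pose lam := t / (t + s).
  have hlam : 0 <= lam <= 1.
    apply/andP; split; first by rewrite divr_ge0 // ltW.
    by rewrite ler_pdivrMr // mul1r lerDl ltW.
  exists (t + s), (lam *: x + (1 - lam) *: x'), (lam *: w + (1 - lam) *: w').
  split => //; [exact: Xc | exact: Wc |].
  by apply/rowP => j; rewrite !mxE /lam; field; rewrite lt0r_neq0.
- move=> t _ t0 [s [x [w [s0 Xx Ww ->]]]].
  by exists (t * s), x, w; split => //; [exact: mulr_gt0 | rewrite scalerA].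
Qed.

Lemma affine_frame_exists X x0 : exists k (B : 'M[R]_(k, n)),
  (forall i, X (x0 + row i B)) /\ forall x, X x -> (x - x0 <= B)%MS.
Proof.
(* A family of maximal rank spans every [x - x0]. *)
pose P r := exists k (B : 'M[R]_(k, n)), (forall i, X (x0 + row i B)) /\ \rank B = r.
have P0 : exists r, `[< P r >].
  by exists 0%N; apply/asboolP; exists 0%N, 0; split; [case | exact: mxrank0].
have Pn r : `[< P r >] -> (r <= n)%N by move=> /asboolP[k [B [_ <-]]]; exact: rank_leq_col.
case: (ex_maxnP P0 Pn) => r /asboolP[k [B [XB rB]]] maxr.
exists k, B; split => // x Xx.
have XB' i : X (x0 + row i (col_mx B (x - x0))).
  case: (splitP i) => j ij.
    by rewrite (_ : i = lshift 1 j) ?rowKu //; apply: val_inj.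
  rewrite (_ : i = rshift k j) ?rowKd; last exact: val_inj.
  have -> : row j (x - x0) = x - x0 by apply/rowP => l; rewrite mxE ord1.
  by rewrite addrC subrK.
have /maxr : `[< P (\rank (col_mx B (x - x0))) >].
  by apply/asboolP; exists (k + 1)%N, (col_mx B (x - x0)).
have sub : (B <= col_mx B (x - x0))%MS by rewrite -addsmxE addsmxSl.
rewrite -rB (geq_leqif (mxrank_leqif_sup sub)) => colB.
by apply: submx_trans colB; rewrite -addsmxE addsmxSr.
Qed.

Definition frame_core X k (B : 'M[R]_(k, n)) p :=
  X p /\ exists2 d, 0 < d & forall j t, `|t| <= d -> X (p + t *: row j B).

Lemma frame_core_exists X x0 k (B : 'M[R]_(k, n)) :
  is_convex X -> X x0 -> (forall i, X (x0 + row i B)) -> exists p, frame_core X B p.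
Proof.
move=> Xc Xx0 XB.
have k1 : 0 < k%:R + 1 :> R by rewrite ltr_wpDl.
pose a : R := (k%:R + 1)^-1.
have a0 : 0 < a by rewrite invr_gt0.
have suma : \sum_(l < k) a = k%:R * a by rewrite sumr_const card_ord mulr_natl.
have ka : k%:R * a + a = 1 by rewrite /a; field; rewrite lt0r_neq0.
exists (x0 + \sum_l a *: row l B); split.
  by apply: convex_subsimplex => // [l|]; [exact: ltW | rewrite suma; lra].
exists a => // j t; rewrite ler_norml => /andP[ta1 ta2].
pose dj l : R := if l == j then t else 0.
have sumdj : \sum_l dj l = t by rewrite (bigD1 j) //= /dj eqxx big1 ?addr0 // => l /negbTE ->.
have -> : x0 + \sum_l a *: row l B + t *: row j B = x0 + \sum_l (a + dj l) *: row l B.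
  rewrite -addrA; congr (_ + _); under [RHS]eq_bigr do rewrite scalerDl.
  rewrite big_split /=; congr (_ + _).
  rewrite (bigD1 j) //= /dj eqxx big1 ?addr0 // => l /negbTE ->.
  exact: scale0r.
apply: convex_subsimplex => // [l|]; first by rewrite /dj; case: (l == j); lra.
by rewrite big_split /= suma sumdj; lra.
Qed.

Lemma frame_core_convex_comb X k (B : 'M[R]_(k, n)) p x lam :
  is_convex X -> frame_core X B p -> X x -> 0 < lam <= 1 ->
  frame_core X B (lam *: p + (1 - lam) *: x).
Proof.
move=> Xc [Xp [d d0 segp]] Xx /andP[lam0 lam1].
have lam01 : 0 <= lam <= 1 by rewrite lam1 ltW.
split; first exact: Xc.
exists (lam * d) => [|j t tle]; first exact: mulr_gt0.
have -> : lam *: p + (1 - lam) *: x + t *: row j B =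
    lam *: (p + (t / lam) *: row j B) + (1 - lam) *: x.
  by apply/rowP => l; rewrite !mxE; field; rewrite lt0r_neq0.
apply: Xc => //; apply: segp.
by rewrite normrM normfV (gtr0_norm lam0) ler_pdivrMr // mulrC.
Qed.

Lemma frame_core_recession X k (B : 'M[R]_(k, n)) p c :
  frame_core X B p -> recession X c -> frame_core X B (p + c).
Proof.
move=> [Xp [d d0 segp]] Kc; split; first exact: Kc.
by exists d => // j t tle; rewrite addrAC; apply: Kc; exact: segp.
Qed.

Lemma aff_hull_sub_span X x0 k (B : 'M[R]_(k, n)) p y :
  (forall x, X x -> (x - x0 <= B)%MS) -> X p -> aff_hull X y -> (y - p <= B)%MS.
Proof.
move=> span Xp [m [w [q [Xq [w1 ->]]]]].
have -> : \sum_i w i *: q i - p = \sum_i w i *: (q i - x0) - (p - x0).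
  rewrite (eq_bigr _ (fun i _ => scalerBr _ _ _)) sumrB -scaler_suml w1 scale1r.
  by rewrite opprB addrA subrK.
apply: addmx_sub; first by apply: summx_sub => i _; apply: scalemx_sub; exact: span.
by rewrite -scaleN1r; apply: scalemx_sub; exact: span.
Qed.

(* Through [pinvmx B], [y - p = \sum_j c_j *: row j B] with [|c_j|] bounded by
   the sup norm of [y - p]; then [y] is the average of the [k] points
   [p + (k * c_j) *: row j B], which lie in [X] when [y] is close to [p]. *)
Lemma frame_core_rel_interior X x0 k (B : 'M[R]_(k, n)) p :
  is_convex X -> (forall x, X x -> (x - x0 <= B)%MS) -> frame_core X B p ->
  rel_interior X p.
Proof.
move=> Xc span [Xp [d d0 segp]]; split => //.
pose M := \sum_j \sum_l `|pinvmx B l j|.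
have M0 : 0 <= M by do 2!apply: sumr_ge0 => ? _.
have kM1 : 0 < k%:R * M + 1 by rewrite ltr_wpDl ?mulr_ge0.
pose e := d / (k%:R * M + 1).
exists e; split => [|y affy close]; first by rewrite divr_gt0.
have yp := aff_hull_sub_span span Xp affy.
pose c := (y - p) *m pinvmx B.
have ck j : `|k%:R * c 0 j| <= d.
  have cj : `|c 0 j| <= e * M.
    have ype l : `|(y - p) 0 l| <= e by rewrite !mxE; exact: ltW.
    apply: le_trans (mulmx_row_norm_le (pinvmx B) j ype) _.
    apply: ler_wpM2l; first by rewrite divr_ge0 // ltW.
    rewrite /M (bigD1 j) //= lerDl.
    by apply: sumr_ge0 => i _; apply: sumr_ge0.
  rewrite normrM ger0_norm // (le_trans (ler_wpM2l (ler0n _ k) cj)) //.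
  have -> : k%:R * (e * M) = d * (k%:R * M) / (k%:R * M + 1).
    by rewrite /e; field; rewrite lt0r_neq0.
  by rewrite ler_pdivrMr //; nra.
have kc j : c 0 j *: row j B = k%:R^-1 *: ((k%:R * c 0 j) *: row j B).
  rewrite scalerA mulrA mulVf ?mul1r // pnatr_eq0 -lt0n.
  exact: leq_ltn_trans (leq0n j) (ltn_ord j).
have -> : y = p + \sum_j k%:R^-1 *: ((k%:R * c 0 j) *: row j B).
  by rewrite -(eq_bigr _ (fun j _ => kc j)) -mulmx_sum_row mulmxKpV // addrC subrK.
apply: convex_subsimplex => // [j|]; first exact: segp.
rewrite sumr_const card_ord -(mulr_natr k%:R^-1).
by have [->|k0] := eqVneq (k%:R : R) 0; [rewrite invr0 mul0r | rewrite mulVf].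
Qed.

(* [z - y0 = t (w - x)] makes a convex combination of [z] and [x] equal to one
   of [y0] and [w]: a point of [sub_recession X Y] in the core of [X]. *)
Lemma diff_cone_not_subspace X Y x0 k (B : 'M[R]_(k, n)) z y0 :
  is_convex X -> is_convex (sub_recession X Y) -> (forall x, X x -> (x - x0 <= B)%MS) ->
  frame_core X B z -> Y y0 -> rel_interior X `&` Y = set0 ->
  ~ diff_cone X (sub_recession X Y) (z - y0).
Proof.
move=> Xc Wc span cz Yy0 riXY [t [x [w [t0 Xx Ww e]]]].
have t1 : 0 < 1 + t by rewrite ltr_pwDr.
pose lam := (1 + t)^-1.
have lam01 : 0 < lam <= 1 by rewrite invr_gt0 t1 invf_le1 // lerDl ltW.
have lamt : 1 - lam = t * lam by rewrite /lam; field; rewrite lt0r_neq0.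
have same : lam *: z + (1 - lam) *: x = lam *: y0 + (1 - lam) *: w.
  have -> : z = y0 + t *: (w - x) by rewrite -e addrC subrK.
  by rewrite lamt; apply/rowP => j; rewrite !mxE; ring.
have lam01' : 0 <= lam <= 1 by case/andP: lam01 => /ltW -> ->.
have [y Yy [c Kc yc]] := Wc _ _ lam (sub_recession_self X Yy0) Ww lam01'.
have cy : frame_core X B (y - c) by rewrite yc -same; exact: frame_core_convex_comb.
have /(frame_core_rel_interior Xc span) := frame_core_recession cy Kc.
rewrite subrK => riy.
by have : (rel_interior X `&` Y) y by []; rewrite riXY.
Qed.

Lemma properly_separated_of_support X Y f :
  linear_functional f -> (forall v, diff_cone X (sub_recession X Y) v -> 0 <= f v) ->
  (exists2 v, diff_cone X (sub_recession X Y) v & 0 < f v) -> properly_separated X Y.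
Proof.
move=> lf f0 [_ [t [x [_ [t0 Xx [y1 Yy1 [c Kc <-]] ->]]]] fv].
have fXY x' y : X x' -> Y y -> f x' <= f y.
  move=> Xx' Yy; rewrite -subr_ge0 -(linear_functionalB lf) -[y - x']scale1r.
  by apply: f0; exists 1, x', y; split => //; exact: sub_recession_self.
have fxc : f (x + c) < f y1.
  move: fv; rewrite (linear_functionalZ lf) pmulr_rgt0 // !(linear_functionalB lf).
  by rewrite (linear_functionalD lf) subr_gt0 ltrBrDl addrC.
exists f; split => //; split.
- apply: ge_ereal_sup => _ [x' Xx' <-]; apply: le_ereal_inf_tmp => _ [y Yy <-].
  by rewrite lee_fin; exact: fXY.
- apply: (@le_lt_trans _ _ (f (x + c))%:E).
    by apply: ereal_inf_lbound; exists (x + c) => //; exact: Kc.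
  apply: (@lt_le_trans _ _ (f y1)%:E); first by rewrite lte_fin.
  by apply: ereal_sup_ubound; exists y1.
Qed.

End Convexity.

Lemma properly_separated_upward (R : realType) n (C X Y : set 'rV[R]_n) :
  is_cone C -> X !=set0 -> Y !=set0 ->
  decomp_antichain_convex C X -> decomp_antichain_convex C Y ->
  upward C X -> rel_interior X `&` Y = set0 -> properly_separated X Y.
Proof.
move=> coneC [x0 Xx0] [y0 Yy0] dX dY up riXY.
have Xc := upward_decomp_convex coneC dX up.
have Wc := is_convex_sub_recession coneC dY up Xc.
have [k [B [XB span]]] := affine_frame_exists X x0.
have [z cz] := frame_core_exists Xc Xx0 XB.
have Kk0 : diff_cone X (sub_recession X Y) (y0 - z).
  by exists 1, z, y0; split => //; [case: cz | exact: sub_recession_self | rewrite scale1r].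
have Kk0N := diff_cone_not_subspace Xc Wc span cz Yy0 riXY; rewrite -opprB in Kk0N.
have [f [lf f0 fpos]] := properly_supported_not_subspace (convex_cone_diff_cone Xc Wc) Kk0 Kk0N.
exact: properly_separated_of_support lf f0 fpos.
Qed.

Theorem corollary4 (R : realType) (n : nat) (C X Y : set 'rV[R]_n) :
  is_cone C -> X !=set0 -> Y !=set0 ->
  decomp_antichain_convex C X -> decomp_antichain_convex C Y ->
  (upward C X -> rel_interior X `&` Y = set0 -> properly_separated X Y) /\
  (downward C X -> rel_interior X `&` Y = set0 -> properly_separated X Y).
Proof.
move=> coneC Xn Yn dX dY; split => [|down]; first exact: properly_separated_upward.
apply: (properly_separated_upward (is_cone_negset coneC)) => //.
- exact: decomp_antichain_convex_negset.
- exact: decomp_antichain_convex_negset.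
- exact: downward_upward_negset.
Qed.
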